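(* For all positive semidefinite $n\times n$ matrices $A$ and $B$ and every $i=1,\dots,n$, $$\lambda_i\big(\min(A,1)\min(B,1)\big)\le \min(\lambda_i(AB),1).$$
   Context: For a positive semidefinite matrix $A$, $\min(A,1)$ denotes the matrix obtained by functional calculus from the function $x\mapsto\min(x,1)$, i.e. every eigenvalue of $A$ larger than $1$ is replaced by $1$ in a spectral decomposition. For a matrix $X$ with real nonnegative spectrum, $\lambda_1(X)\ge\dots\ge\lambda_n(X)$ denote its eigenvalues sorted non-increasingly. *)

From HB Require Import structures.
From mathcomp Require Import all_boot all_order all_algebra.
From mathcomp Require Import sesquilinear spectral.
Set Implicit Arguments. Unset Strict Implicit. Unset Printing Implicit Defensive.
Import Order.TTheory GRing.Theory Num.Theory.
Local Open Scope ring_scope.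
Local Open Scope sesquilinear_scope.

Definition psdmx (C : numClosedFieldType) n (A : 'M[C]_n) : Prop :=
  A \is hermsymmx /\ forall v : 'rV[C]_n, 0 <= (v *m A *m v ^t*) 0 0.

(* min(A,1) by functional calculus, using the spectral decomposition
   A = P^-1 diag(d) P (P unitary) provided by mathcomp's spectral.v. *)
Definition min1mx (C : numClosedFieldType) n (A : 'M[C]_n) : 'M[C]_n :=
  invmx (spectralmx A)
    *m diag_mx (map_mx (fun x => Num.min x 1) (spectral_diag A))
    *m spectralmx A.

Definition eigvals (C : numClosedFieldType) n (X : 'M[C]_n) : seq C :=
  sort (fun x y : C => y <= x) (sval (closed_field_poly_normal (char_poly X))).

(* lambda X i = the (i+1)-th largest eigenvalue (0-based index i). *)
Definition lambda (C : numClosedFieldType) n (X : 'M[C]_n) (i : nat) : C :=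
  nth 0 (eigvals X) i.

From HB Require Import structures.
From mathcomp Require Import all_boot all_order all_algebra.
From mathcomp Require Import sesquilinear spectral.
Import Order.TTheory GRing.Theory Num.Theory.
Set Implicit Arguments. Unset Strict Implicit. Unset Printing Implicit Defensive.
Local Open Scope ring_scope.
Local Open Scope sesquilinear_scope.

(* Write [A' = min(A,1)] and [B' = min(B,1)]; then [A' <= A], [A' <= 1] and
   [B' <= B], [B' <= 1] in the Loewner order.  For a positive semidefinite [X]
   with square root [S], [XY] has the characteristic polynomial of [S Y S], and
   congruence by [S] preserves the Loewner order, so by Weyl monotonicity
   [lambda_i(XY)] is monotone in [Y].  Hence
     lambda_i(A'B') <= lambda_i(A'B) = lambda_i(BA') <= lambda_i(BA) = lambda_i(AB)
   and lambda_i(A'B') <= lambda_i(A') <= lambda_i(1) = 1. *)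

Lemma char_poly_mulC (F : fieldType) n (X Y : 'M[F]_n) :
  char_poly (X *m Y) = char_poly (Y *m X).
Proof.
rewrite /char_poly /char_poly_mx !map_mxM.
set x := map_mx polyC X; set y := map_mx polyC Y; set t := 'X : {poly F}.
pose M := block_mx t%:M x y (1%:M : 'M_n).
have tn0 : t ^+ n != 0 by rewrite expf_neq0 // polyX_eq0.
have E1 : block_mx 1%:M (-x) 0 t%:M *m M =
          block_mx (t%:M - x *m y) 0 (t%:M *m y) t%:M.
  by rewrite mulmx_block !mul1mx !mul0mx !add0r !mulmx1 mulNmx addrN.
have E2 : block_mx 1%:M 0 (-y) t%:M *m M =
          block_mx t%:M x 0 (t%:M - y *m x).
  rewrite mulmx_block !mul1mx !mul0mx !addr0 !mulmx1 mulNmx.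
  by rewrite mul_mx_scalar mul_scalar_mx addNr addrC mulNmx.
have := congr1 determinant E1; have := congr1 determinant E2.
rewrite !det_mulmx det_ublock det_lblock det_lblock det_ublock !det_scalar.
rewrite expr1n !mul1r => D2 D1.
by apply: (mulfI tn0); rewrite mulrC -D1 D2 mulrC.
Qed.

Section SortedNonincreasing.
Variables (disp : Order.disp_t) (T : porderType disp) (x0 : T) (s : seq T).
Hypothesis s_sorted : sorted (fun x y => (y <= x)%O) s.

Let nth_ge : {in [pred k | (k < size s)%N] &,
  {homo nth x0 s : i j / (i <= j)%N >-> (j <= i)%O}}.
Proof.
apply: sorted_leq_nth s_sorted; last by move=> x; exact: lexx.
by move=> y x z le_yx le_zy; exact: le_trans le_zy le_yx.
Qed.

Lemma sorted_count_ge_nth i : (i < size s)%N ->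
  (i < count (fun x => nth x0 s i <= x)%O s)%N.
Proof.
move=> lt_is; rewrite -[X in count _ X](cat_take_drop i.+1) count_cat.
apply: leq_trans (leq_addr _ _).
suff : all (fun x => nth x0 s i <= x)%O (take i.+1 s).
  by rewrite all_count => /eqP->; rewrite size_takel.
apply/(all_nthP x0) => j; rewrite size_takel // => lt_ji; rewrite nth_take //.
by apply: nth_ge; rewrite ?inE //; exact: leq_trans lt_ji lt_is.
Qed.

Lemma sorted_count_le_nth i : (i < size s)%N ->
  (size s - i <= count (fun x => x <= nth x0 s i)%O s)%N.
Proof.
move=> lt_is; rewrite -[X in count _ X](cat_take_drop i) count_cat.
apply: leq_trans (leq_addl _ _).
suff : all (fun x => x <= nth x0 s i)%O (drop i s).
  by rewrite all_count => /eqP->; rewrite size_drop.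
apply/(all_nthP x0) => j; rewrite size_drop => lt_j; rewrite nth_drop.
by apply: nth_ge; rewrite ?inE ?leq_addr // -ltn_subRL.
Qed.

End SortedNonincreasing.

Section HermitianSpectrum.
Variables (C : numClosedFieldType) (n : nat).
Implicit Types (P Q M N X Y Z : 'M[C]_n) (d e v : 'rV[C]_n) (A B : {set 'I_n}).

Lemma trmxC_mul m p q (A : 'M[C]_(m, p)) (B : 'M[C]_(p, q)) :
  (A *m B)^t* = B^t* *m A^t*.
Proof. by rewrite trmx_mul map_mxM. Qed.

Lemma hermsymmx_trCP M : reflect (M^t* = M) (M \is hermsymmx).
Proof.
apply: (iffP idP) => [/is_hermitianmxP|hM]; first by rewrite expr0 scale1r => <-.
by apply/is_hermitianmxP; rewrite expr0 scale1r hM.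
Qed.

Definition spectral_form P d : 'M[C]_n := P^t* *m diag_mx d *m P.

Definition qform M v : C := (v *m M *m v^t*) 0 0.

Definition loewner_le M N := forall v, qform M v <= qform N v.

Definition row_seq d : seq C := [seq d 0 j | j <- enum 'I_n].

Lemma qform_spectral_form P d v :
  qform (spectral_form P d) v = \sum_j d 0 j * `|(v *m P^t*) 0 j| ^+ 2.
Proof.
have -> : qform (spectral_form P d) v =
    ((v *m P^t*) *m diag_mx d *m (v *m P^t*)^t*) 0 0.
  by rewrite /qform trmxC_mul trmxCK -!mulmxA.
rewrite mul_mx_diag mxE; apply: eq_bigr => j _.
by rewrite !mxE normCK mulrCA mulrA.
Qed.

Lemma qform_congr (T : 'M[C]_n) M v : qform (T *m M *m T^t*) v = qform M (v *m T).
Proof. by rewrite /qform trmxC_mul -!mulmxA. Qed.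

Lemma qform1_gt0 v : v != 0 -> 0 < qform 1%:M v.
Proof. by rewrite /qform mulmx1 -dotmxE dnorm_gt0. Qed.

Lemma spectral_form_herm P d : d \is a realmx -> spectral_form P d \is hermsymmx.
Proof.
move=> d_real; apply/hermsymmx_trCP; rewrite !trmxC_mul trmxCK mulmxA.
congr (_ *m _ *m _); apply/matrixP => i j; rewrite !mxE rmorphMn /=.
have [->|_] := eqVneq i j; last by rewrite !mulr0n.
by rewrite !mulr1n (CrealP (mxOverP d_real 0 j)).
Qed.

Lemma spectral_formE M : M \is hermsymmx ->
  M = spectral_form (spectralmx M) (spectral_diag M).
Proof.
move=> hM; rewrite /spectral_form -invmx_unitary ?spectral_unitarymx //.
exact/orthomx_spectralP/hermitian_normalmx.
Qed.

Lemma spectral_form1 P : P \is unitarymx -> spectral_form P (const_mx 1) = 1%:M.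
Proof.
move=> U; rewrite /spectral_form diag_const_mx mulmx1.
by rewrite -invmx_unitary // mulVmx // unitarymx_unit.
Qed.

Lemma spectral_form_sqrt P d : P \is unitarymx ->
  spectral_form P (map_mx sqrtC d) *m spectral_form P (map_mx sqrtC d) =
  spectral_form P d.
Proof.
move=> U; rewrite /spectral_form -!mulmxA (mulmxA P) (unitarymxP U) mul1mx.
rewrite !mulmxA; congr (_ *m _); rewrite -mulmxA; congr (_ *m _).
apply/matrixP => i j; rewrite mul_diag_mx !mxE.
have [->|_] := eqVneq i j; last by rewrite !mulr0n mulr0.
by rewrite !mulr1n -expr2 sqrtCK.
Qed.

Lemma qform_spectral_form_row P d j : P \is unitarymx ->
  qform (spectral_form P d) (row j P) = d 0 j.
Proof.
move=> U; rewrite qform_spectral_form -row_mul (unitarymxP U) (bigD1 j) //=.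
rewrite big1 => [|k ne_kj]; first by rewrite !mxE eqxx normr1 expr1n mulr1 addr0.
by rewrite !mxE eq_sym (negPf ne_kj) normr0 expr0n mulr0.
Qed.

Lemma loewner_spectral_form P d e : (forall j, d 0 j <= e 0 j) ->
  loewner_le (spectral_form P d) (spectral_form P e).
Proof.
move=> le_de v; rewrite !qform_spectral_form; apply: ler_sum => j _.
by rewrite ler_wpM2r ?exprn_ge0.
Qed.

Lemma loewner_congr (T : 'M[C]_n) M N : loewner_le M N ->
  loewner_le (T *m M *m T^t*) (T *m N *m T^t*).
Proof. by move=> le_MN v; rewrite !qform_congr. Qed.

Lemma hermsymmx_congr (T : 'M[C]_n) M : M \is hermsymmx ->
  T *m M *m T^t* \is hermsymmx.
Proof.
move=> /hermsymmx_trCP hM; apply/hermsymmx_trCP.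
by rewrite !trmxC_mul trmxCK hM -!mulmxA.
Qed.

Lemma psdmx_spectral_form P d : (forall j, 0 <= d 0 j) ->
  psdmx (spectral_form P d).
Proof.
move=> d_ge0; split.
  by apply/spectral_form_herm/mxOverP => i j; rewrite ord1 ger0_real.
move=> v; rewrite -/(qform _ v) qform_spectral_form; apply: sumr_ge0 => j _.
by rewrite mulr_ge0 ?exprn_ge0.
Qed.

Lemma psdmx_spectral_diag_ge0 M : psdmx M -> forall j, 0 <= spectral_diag M 0 j.
Proof.
case=> hM M_ge0 j; rewrite -(qform_spectral_form_row _ j (spectral_unitarymx M)).
by rewrite -(spectral_formE hM); exact: M_ge0.
Qed.

Lemma min1mxE M : min1mx M =
  spectral_form (spectralmx M) (map_mx (fun x => Num.min x 1) (spectral_diag M)).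
Proof. by rewrite /min1mx invmx_unitary ?spectral_unitarymx. Qed.

Lemma min1r_bounds (x : C) : 0 <= x ->
  [/\ 0 <= Num.min x 1, Num.min x 1 <= x & Num.min x 1 <= 1].
Proof.
move=> x_ge0; rewrite minEle; case: ifP => // /negbT; rewrite real_leNgt //.
  by rewrite negbK => /ltW.
exact: ger0_real.
Qed.

Lemma psdmx_min1mx M : psdmx M -> psdmx (min1mx M).
Proof.
move=> pM; rewrite min1mxE; apply: psdmx_spectral_form => j; rewrite mxE.
by have [] := min1r_bounds (psdmx_spectral_diag_ge0 pM j).
Qed.

Lemma loewner_min1mx M : psdmx M -> loewner_le (min1mx M) M.
Proof.
move=> pM; rewrite min1mxE [X in loewner_le _ X](spectral_formE pM.1).
apply: loewner_spectral_form => j; rewrite mxE.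
by have [] := min1r_bounds (psdmx_spectral_diag_ge0 pM j).
Qed.

Lemma loewner_min1mx1 M : psdmx M -> loewner_le (min1mx M) 1%:M.
Proof.
move=> pM; rewrite min1mxE -(spectral_form1 (spectral_unitarymx M)).
apply: loewner_spectral_form => j; rewrite !mxE.
by have [] := min1r_bounds (psdmx_spectral_diag_ge0 pM j).
Qed.

Lemma char_poly_spectral_form P d : P \is unitarymx ->
  char_poly (spectral_form P d) = \prod_j ('X - (d 0 j)%:P).
Proof.
move=> U; rewrite /spectral_form -mulmxA char_poly_mulC mulmxtVK //.
rewrite char_poly_trig ?diag_mx_is_trig //.
by apply: eq_bigr => j _; rewrite mxE eqxx mulr1n.
Qed.

Lemma size_eigvals M : size (eigvals M) = n.
Proof.
rewrite /eigvals size_sort; case: closed_field_poly_normal => r /= E.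
have := size_char_poly M.
by rewrite E (monicP (char_poly_monic M)) scale1r size_prod_XsubC => -[].
Qed.

Lemma perm_eq_eigvals M d : char_poly M = \prod_j ('X - (d 0 j)%:P) ->
  perm_eq (eigvals M) (row_seq d).
Proof.
rewrite /eigvals perm_sort => E; case: closed_field_poly_normal => r /= Er.
rewrite (monicP (char_poly_monic M)) scale1r in Er.
by apply: prod_XsubC_eq; rewrite -Er E /row_seq big_map big_enum.
Qed.

Lemma eigvals_herm M : M \is hermsymmx ->
  perm_eq (eigvals M) (row_seq (spectral_diag M)).
Proof.
move=> hM; apply: perm_eq_eigvals.
by rewrite {1}(spectral_formE hM) char_poly_spectral_form ?spectral_unitarymx.
Qed.

Lemma eigvals_sorted M : M \is hermsymmx ->
  sorted (fun x y : C => y <= x) (eigvals M).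
Proof.
move=> hM; apply: (sort_sorted_in (P := fun x : C => x \is Num.real)).
  by move=> x y xR yR; rewrite orbC real_leVge.
have := eigvals_herm hM; rewrite /eigvals perm_sort => /perm_all ->.
by apply/allP => _ /mapP [j _ ->]; exact/mxOverP/hermitian_spectral_diag_real.
Qed.

Lemma count_row_seq (p : pred C) d : count p (row_seq d) = #|[set j | p (d 0 j)]|.
Proof.
rewrite /row_seq count_map cardE /enum_mem size_filter count_filter.
by apply: eq_count => j; rewrite !inE andbT.
Qed.

Lemma lambda_mem M d i : char_poly M = \prod_j ('X - (d 0 j)%:P) ->
  (i < n)%N -> lambda M i \in row_seq d.
Proof.
move=> E lt_in; rewrite /lambda -(perm_mem (perm_eq_eigvals E)).
by rewrite mem_nth ?size_eigvals.
Qed.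

Lemma lambda1 (i : 'I_n) : lambda (1%:M : 'M[C]_n) i = 1.
Proof.
have E : char_poly (1%:M : 'M[C]_n) = \prod_j ('X - ((const_mx 1 : 'rV_n) 0 j)%:P).
  rewrite char_poly_trig ?scalar_mx_is_trig //.
  by apply: eq_bigr => j _; rewrite !mxE eqxx.
by have /mapP [j _ ->] := lambda_mem E (ltn_ord i); rewrite mxE.
Qed.

Lemma lambda_mulC X Y i : lambda (X *m Y) i = lambda (Y *m X) i.
Proof. by rewrite /lambda /eigvals char_poly_mulC. Qed.

Lemma card_ge_lambda M (i : 'I_n) : M \is hermsymmx ->
  (i < #|[set j | (lambda M i <= spectral_diag M 0 j)%R]|)%N.
Proof.
move=> hM; rewrite -count_row_seq -(permP (eigvals_herm hM)).
by apply: sorted_count_ge_nth; rewrite ?eigvals_sorted ?size_eigvals.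
Qed.

Lemma card_le_lambda M (i : 'I_n) : M \is hermsymmx ->
  (n - i <= #|[set j | (spectral_diag M 0 j <= lambda M i)%R]|)%N.
Proof.
move=> hM; rewrite -(count_row_seq (fun x => x <= lambda M i)).
rewrite -(permP (eigvals_herm hM)) -[X in (X - i <= _)%N](size_eigvals M).
by apply: sorted_count_le_nth; rewrite ?eigvals_sorted ?size_eigvals.
Qed.

Definition rows_in P (A : {set 'I_n}) : 'M[C]_(#|A|, n) :=
  rowsub (@enum_val _ (mem A)) P.

Lemma mxrank_rows_in P A : P \is unitarymx -> \rank (rows_in P A) = #|A|.
Proof.
move=> U; apply: mxrank_unitary; apply/unitarymxP/matrixP => a b.
have := congr1 (fun Q : 'M_n => Q (enum_val a) (enum_val b)) (unitarymxP U).
rewrite !mxE (inj_eq enum_val_inj) => <-.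
by apply: eq_bigr => j _; rewrite !mxE.
Qed.

Lemma qform_rows_in P d A v : P \is unitarymx -> (v <= rows_in P A)%MS ->
  qform (spectral_form P d) v = \sum_(j in A) d 0 j * `|(v *m P^t*) 0 j| ^+ 2.
Proof.
move=> U /submxP [D ->]; rewrite qform_spectral_form (bigID (mem A)) /=.
rewrite [X in _ + X]big1 ?addr0 // => j jNA.
rewrite -mulmxA mul_rowsub_mx (unitarymxP U) mxE big1 ?normr0 ?expr0n ?mulr0 //.
move=> t _; rewrite !mxE; case: eqP => [jt|]; last by rewrite mulr0.
by move: jNA; rewrite -jt enum_valP.
Qed.

Lemma common_row_rows_in P Q A B : P \is unitarymx -> Q \is unitarymx ->
  (n < #|A| + #|B|)%N ->
  exists v, [/\ v != 0, (v <= rows_in P A)%MS & (v <= rows_in Q B)%MS].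
Proof.
move=> UP UQ ltn_AB; set W := (rows_in P A :&: rows_in Q B)%MS.
have W_neq0 : W != 0.
  rewrite -mxrank_eq0 -lt0n; have := mxrank_sum_cap (rows_in P A) (rows_in Q B).
  have := rank_leq_col (rows_in P A + rows_in Q B)%MS.
  rewrite !mxrank_rows_in // => le_sn E; rewrite lt0n.
  by apply: contraTneq ltn_AB => W0; rewrite -E W0 addn0 -leqNgt.
exists (nz_row W); rewrite nz_row_eq0 W_neq0; split => //.
  exact: submx_trans (nz_row_sub _) (capmxSl _ _).
exact: submx_trans (nz_row_sub _) (capmxSr _ _).
Qed.

(* Weyl monotonicity: a dimension count gives a nonzero [v] on which [M] is at
   least [lambda M i] and [N] at most [lambda N i]. *)
Lemma lambda_le M N (i : 'I_n) : M \is hermsymmx -> N \is hermsymmx ->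
  loewner_le M N -> lambda M i <= lambda N i.
Proof.
move=> hM hN le_MN; have [UM UN] := (spectral_unitarymx M, spectral_unitarymx N).
have [v [v_neq0 vA vB]] : exists v, [/\ v != 0,
    (v <= rows_in (spectralmx M) [set j | (lambda M i <= spectral_diag M 0 j)%R])%MS
  & (v <= rows_in (spectralmx N) [set j | (spectral_diag N 0 j <= lambda N i)%R])%MS].
  apply: common_row_rows_in => //.
  apply: leq_trans (leq_add (card_ge_lambda i hM) (card_le_lambda i hN)).
  by rewrite addSn ltnS subnKC // ltnW.
set a := lambda M i in vA *; set b := lambda N i in vB *.
have lo : a * qform 1%:M v <= qform M v.
  rewrite [in qform M v](spectral_formE hM) -(spectral_form1 UM).
  rewrite !(qform_rows_in _ _ vA) // mulr_sumr; apply: ler_sum => j.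
  rewrite inE [const_mx 1 0 j]mxE mul1r => le_aj.
  by rewrite ler_wpM2r ?exprn_ge0.
have hi : qform N v <= b * qform 1%:M v.
  rewrite [in qform N v](spectral_formE hN) -(spectral_form1 UN).
  rewrite !(qform_rows_in _ _ vB) // mulr_sumr; apply: ler_sum => j.
  rewrite inE [const_mx 1 0 j]mxE mul1r => le_jb.
  by rewrite ler_wpM2r ?exprn_ge0.
by rewrite -(ler_pM2r (qform1_gt0 v_neq0)) (le_trans lo) // (le_trans _ hi).
Qed.

Lemma lambda_psdmx_mul_le X Y Z (i : 'I_n) : psdmx X ->
  Y \is hermsymmx -> Z \is hermsymmx -> loewner_le Y Z ->
  lambda (X *m Y) i <= lambda (X *m Z) i.
Proof.
move=> pX hY hZ le_YZ; have X_ge0 := psdmx_spectral_diag_ge0 pX.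
pose S := spectral_form (spectralmx X) (map_mx sqrtC (spectral_diag X)).
have /hermsymmx_trCP St : S \is hermsymmx.
  by apply/spectral_form_herm/mxOverP => a j; rewrite ord1 mxE sqrtC_real.
have SS : S *m S = X.
  by rewrite spectral_form_sqrt ?spectral_unitarymx // -(spectral_formE pX.1).
have lambda_congr W : lambda (X *m W) i = lambda (S *m W *m S^t*) i.
  by rewrite St -SS -mulmxA lambda_mulC mulmxA.
rewrite !lambda_congr; apply: lambda_le; rewrite ?hermsymmx_congr //.
exact: loewner_congr.
Qed.

End HermitianSpectrum.

Theorem lemma3 (C : numClosedFieldType) (n : nat) (A B : 'M[C]_n) :
  psdmx A -> psdmx B ->
  forall i : 'I_n,
    lambda (min1mx A *m min1mx B) i <= Num.min (lambda (A *m B) i) 1.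
Proof.
move=> pA pB i.
have [pA' pB'] := (psdmx_min1mx pA, psdmx_min1mx pB).
have h1 : (1%:M : 'M[C]_n) \is hermsymmx.
  by apply/hermsymmx_trCP; rewrite trmx1 map_mx1.
have le_AB : lambda (min1mx A *m min1mx B) i <= lambda (A *m B) i.
  apply: le_trans (lambda_psdmx_mul_le i pA' pB'.1 pB.1 (loewner_min1mx pB)) _.
  rewrite lambda_mulC [X in _ <= X]lambda_mulC.
  exact: lambda_psdmx_mul_le pB pA'.1 pA.1 (loewner_min1mx pA).
have le_1 : lambda (min1mx A *m min1mx B) i <= 1.
  apply: le_trans (lambda_psdmx_mul_le i pA' pB'.1 h1 (loewner_min1mx1 pB)) _.
  rewrite mulmx1 -(lambda1 C i).
  exact: lambda_le pA'.1 h1 (loewner_min1mx1 pA).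
by rewrite minEle; case: ifP.
Qed.
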